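(* Let $A=\langle a_1,a_2\mid \Pi(a_1,a_2,m_A)=\Pi(a_2,a_1,m_A)\rangle$ be a dihedral Artin group with $m_A<\infty$. Let $k_1,k_2\in\mathbb{Z}$ with $k_2\neq0$. Then the centralizer of $\delta_A^{k_1}a_1^{k_2}$ in $A$ is the free abelian group generated by $\delta_A$ and $a_1$.
   Context: $\Pi(s,t,m)$ denotes the alternating word $sts\cdots$ of length $m$; $m_A\ge 2$ is an integer. $\Delta_A=\Pi(a_1,a_2,m_A)=\Pi(a_2,a_1,m_A)$ is the Garside element, and $\delta_A=\Delta_A^2$ if $m_A$ is odd, $\delta_A=\Delta_A$ if $m_A$ is even. *)

(* The dihedral Artin group A_m = < a1, a2 | Pi(a1,a2,m) = Pi(a2,a1,m) >
   is realized as the quotient of the free monoid on the letters a1^{+-1}, a2^{+-1}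
   by the congruence generated by free cancellation and the defining relation. *)
From Stdlib Require Import List ZArith Arith.
Import ListNotations.

(* A letter is (generator, inverted?) ; generator false = a1, true = a2. *)
Definition letter := (bool * bool)%type.
Definition word := list letter.

Definition a1 : letter := (false, false).
Definition a2 : letter := (true, false).

Definition linv (x : letter) : letter := (fst x, negb (snd x)).
Definition winv (w : word) : word := rev (map linv w).

Fixpoint Pi (s t : letter) (m : nat) : word :=
  match m with
  | O => []
  | S m' => s :: Pi t s m'
  end.

Inductive artin_eq (m : nat) : word -> word -> Prop :=
| ae_refl : forall u, artin_eq m u u
| ae_sym : forall u v, artin_eq m u v -> artin_eq m v u
| ae_trans : forall u v w, artin_eq m u v -> artin_eq m v w -> artin_eq m u w
| ae_cong : forall p q u v, artin_eq m u v -> artin_eq m (p ++ u ++ q) (p ++ v ++ q)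
| ae_free : forall x, artin_eq m [x; linv x] []
| ae_rel : artin_eq m (Pi a1 a2 m) (Pi a2 a1 m).

Fixpoint wrep (w : word) (n : nat) : word :=
  match n with O => [] | S n' => w ++ wrep w n' end.
Definition wpow (w : word) (k : Z) : word :=
  if (0 <=? k)%Z then wrep w (Z.to_nat k) else wrep (winv w) (Z.to_nat (- k)).

Definition Delta (m : nat) : word := Pi a1 a2 m.
Definition delta (m : nat) : word :=
  if Nat.odd m then Delta m ++ Delta m else Delta m.

(* delta generates a central subgroup, and A / <delta> is a free product of two cyclic groups:
   Z/2 * Z/m generated by Delta and a1 a2 when m is odd, Z * Z/(m/2) generated by a1 and a1 a2
   when m is even.  Words act on reduced syllable sequences of this free product, and lifting
   normal forms back to words shows that every word is its lifted normal form times a power of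
   delta.  Since delta^k1 is central, the centraliser of delta^k1 a1^k2 is that of a1^k2.  In
   the free product, an element commuting with a nonzero power of the image of a1 is a power of
   it: for m even a1 is a free generator of infinite order; for m odd its image y^((m+1)/2) x
   (x = Delta, y = a1 a2) is cyclically reduced and not a proper power, and a commuting element
   can be shortened by peeling copies of a1 off its normal form.  Finally a nonzero power of a1 acts nontrivially,
   and delta has positive exponent sum, so delta and a1 are independent. *)

From Stdlib Require Import List ZArith Arith Lia Bool Setoid Morphisms.
Import ListNotations.

Lemma artin_eq_app m u u' v v' :
  artin_eq m u u' -> artin_eq m v v' -> artin_eq m (u ++ v) (u' ++ v').
Proof.
  intros Hu Hv. apply ae_trans with (u' ++ v).
  - exact (ae_cong m [] v u u' Hu).
  - pose proof (ae_cong m u' [] v v' Hv) as H. now rewrite !app_nil_r in H.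
Qed.

#[global] Instance artin_eq_Equivalence m : Equivalence (artin_eq m).
Proof. split; [intro; apply ae_refl | intros ??; apply ae_sym | intros ???; apply ae_trans]. Qed.

#[global] Instance app_artin_eq_Proper m :
  Proper (artin_eq m ==> artin_eq m ==> artin_eq m) (@app letter).
Proof. intros ?? Hu ?? Hv. now apply artin_eq_app. Qed.

#[global] Instance cons_artin_eq_Proper m x : Proper (artin_eq m ==> artin_eq m) (cons x).
Proof. intros u v H. change (artin_eq m ([x] ++ u) ([x] ++ v)). now rewrite H. Qed.

Lemma linvK x : linv (linv x) = x.
Proof. destruct x as [g s]. unfold linv. simpl. now rewrite negb_involutive. Qed.

Lemma ae_free_inv m x : artin_eq m [linv x; x] [].
Proof. pose proof (ae_free m (linv x)) as H. now rewrite linvK in H. Qed.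

Lemma artin_eq_cancel_pair m b s u : artin_eq m ((b, s) :: (b, negb s) :: u) u.
Proof.
  change ((b, s) :: (b, negb s) :: u) with ([(b, s); linv (b, s)] ++ u). now rewrite ae_free.
Qed.

Lemma winv_cons x w : winv (x :: w) = winv w ++ [linv x].
Proof. reflexivity. Qed.

Lemma winv_app u v : winv (u ++ v) = winv v ++ winv u.
Proof. unfold winv. now rewrite map_app, rev_app_distr. Qed.

Lemma winvK w : winv (winv w) = w.
Proof.
  unfold winv. rewrite map_rev, rev_involutive, map_map.
  erewrite map_ext; [apply map_id | apply linvK].
Qed.

Lemma app_winv_r m w : artin_eq m (w ++ winv w) [].
Proof.
  induction w as [|x w IH]; [reflexivity|].
  rewrite winv_cons. change (x :: w) with ([x] ++ w).
  rewrite <- app_assoc, (app_assoc w), IH. apply ae_free.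
Qed.

Lemma app_winv_l m w : artin_eq m (winv w ++ w) [].
Proof. pose proof (app_winv_r m (winv w)) as H. now rewrite winvK in H. Qed.

Lemma app_cancel_l m u v v' : artin_eq m (u ++ v) (u ++ v') -> artin_eq m v v'.
Proof.
  intro H. transitivity ((winv u ++ u) ++ v); [now rewrite app_winv_l|].
  rewrite <- app_assoc, H, app_assoc, app_winv_l. reflexivity.
Qed.

Lemma winv_unique m u v : artin_eq m (u ++ v) [] -> artin_eq m (winv u) v.
Proof.
  intro H. transitivity (winv u ++ (u ++ v)); [now rewrite H, app_nil_r|].
  rewrite app_assoc, app_winv_l. reflexivity.
Qed.

#[global] Instance winv_artin_eq_Proper m : Proper (artin_eq m ==> artin_eq m) winv.
Proof. intros u v H. apply winv_unique. rewrite H. apply app_winv_r. Qed.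

Lemma wrep_S_r w n : wrep w (S n) = wrep w n ++ w.
Proof.
  induction n as [|n IH]; simpl in *; [now rewrite app_nil_r|].
  now rewrite <- app_assoc, <- IH.
Qed.

Lemma wrep_add w a b : wrep w (a + b) = wrep w a ++ wrep w b.
Proof. induction a as [|a IH]; simpl; [reflexivity|]. now rewrite IH, app_assoc. Qed.

#[global] Instance wrep_artin_eq_Proper m : Proper (artin_eq m ==> eq ==> artin_eq m) wrep.
Proof. intros u v H n ? <-. induction n; simpl; [reflexivity|]. now apply artin_eq_app. Qed.

Lemma wpow_of_nat w n : wpow w (Z.of_nat n) = wrep w n.
Proof.
  unfold wpow. replace (0 <=? Z.of_nat n)%Z with true by (symmetry; apply Z.leb_le; lia).
  now rewrite Nat2Z.id.
Qed.

Lemma wpow_opp_of_nat w n : wpow w (- Z.of_nat n) = wrep (winv w) n.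
Proof.
  unfold wpow. destruct n as [|n]; [reflexivity|].
  replace (0 <=? - Z.of_nat (S n))%Z with false by (symmetry; apply Z.leb_gt; lia).
  now rewrite Z.opp_involutive, Nat2Z.id.
Qed.

Lemma wpow_1 m w : artin_eq m (wpow w 1) w.
Proof. unfold wpow. simpl. now rewrite app_nil_r. Qed.

Lemma wpow_m1 m w : artin_eq m (wpow w (-1)) (winv w).
Proof. unfold wpow. simpl. now rewrite app_nil_r. Qed.

#[global] Instance wpow_artin_eq_Proper m : Proper (artin_eq m ==> eq ==> artin_eq m) wpow.
Proof. intros u v H k ? <-. unfold wpow. destruct (0 <=? k)%Z; now rewrite H. Qed.

Lemma wpow_succ m w k : artin_eq m (wpow w (k + 1)) (wpow w k ++ w).
Proof.
  destruct (Z_le_gt_dec 0 k).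
  - replace k with (Z.of_nat (Z.to_nat k)) by lia.
    replace (Z.of_nat (Z.to_nat k) + 1)%Z with (Z.of_nat (S (Z.to_nat k))) by lia.
    rewrite !wpow_of_nat, wrep_S_r. reflexivity.
  - set (j := Z.to_nat (- k - 1)).
    replace k with (- Z.of_nat (S j))%Z by lia.
    replace (- Z.of_nat (S j) + 1)%Z with (- Z.of_nat j)%Z by lia.
    rewrite !wpow_opp_of_nat, wrep_S_r, <- app_assoc, app_winv_l, app_nil_r. reflexivity.
Qed.

Lemma wpow_pred m w k : artin_eq m (wpow w (k - 1)) (wpow w k ++ winv w).
Proof.
  pose proof (wpow_succ m w (k - 1)) as H. replace (k - 1 + 1)%Z with k in H by lia.
  rewrite H, <- app_assoc, app_winv_r, app_nil_r. reflexivity.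
Qed.

Lemma wpow_add m w a b : artin_eq m (wpow w (a + b)) (wpow w a ++ wpow w b).
Proof.
  induction b using Z.peano_ind.
  - rewrite Z.add_0_r, app_nil_r. reflexivity.
  - rewrite <- Z.add_1_r, Z.add_assoc, !wpow_succ, IHb, app_assoc. reflexivity.
  - rewrite <- Z.sub_1_r, Z.add_sub_assoc, !wpow_pred, IHb, app_assoc. reflexivity.
Qed.

Lemma winv_wpow m w a : artin_eq m (winv (wpow w a)) (wpow w (- a)).
Proof. apply winv_unique. rewrite <- wpow_add, Z.add_opp_diag_r. reflexivity. Qed.

Lemma wpow_mul m w a b : artin_eq m (wpow (wpow w a) b) (wpow w (a * b)).
Proof.
  induction b using Z.peano_ind.
  - rewrite Z.mul_0_r. reflexivity.
  - rewrite <- Z.add_1_r, wpow_succ, IHb, <- wpow_add. f_equiv. lia.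
  - rewrite <- Z.sub_1_r, wpow_pred, IHb, winv_wpow, <- wpow_add. f_equiv. lia.
Qed.

Lemma wpow_comm m w a b : artin_eq m (wpow w a ++ wpow w b) (wpow w b ++ wpow w a).
Proof. rewrite <- !wpow_add, Z.add_comm. reflexivity. Qed.

Definition commute m u v := artin_eq m (u ++ v) (v ++ u).

Lemma commute_sym m u v : commute m u v -> commute m v u.
Proof. unfold commute. now symmetry. Qed.

Lemma commute_app_r m c u v : commute m c u -> commute m c v -> commute m c (u ++ v).
Proof.
  unfold commute. intros Hu Hv.
  rewrite app_assoc, Hu, <- app_assoc, Hv, app_assoc. reflexivity.
Qed.

Lemma commute_app_l m u v c : commute m u c -> commute m v c -> commute m (u ++ v) c.
Proof. intros Hu Hv. apply commute_sym, commute_app_r; now apply commute_sym. Qed.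

Lemma commute_winv_l m u v : commute m u v -> commute m (winv u) v.
Proof.
  unfold commute. intro H.
  transitivity (winv u ++ v ++ (u ++ winv u)); [now rewrite app_winv_r, app_nil_r|].
  rewrite (app_assoc v), <- H, <- app_assoc, app_assoc, app_winv_l. reflexivity.
Qed.

Lemma commute_wpow_l m u v k : commute m u v -> commute m (wpow u k) v.
Proof.
  intro H. pose proof (commute_winv_l _ _ _ H) as Hi. unfold commute in *.
  induction k using Z.peano_ind.
  - rewrite app_nil_r. reflexivity.
  - rewrite <- Z.add_1_r, wpow_succ, <- app_assoc, H, app_assoc, IHk, <- app_assoc. reflexivity.
  - rewrite <- Z.sub_1_r, wpow_pred, <- app_assoc, Hi, app_assoc, IHk, <- app_assoc. reflexivity.
Qed.

Definition central m c := forall v, commute m c v.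

Lemma central_of_generators m c : commute m c [a1] -> commute m c [a2] -> central m c.
Proof.
  intros H1 H2.
  assert (Hx : forall x, commute m c [x]).
  { intros [[|] [|]]; [| exact H2 | | exact H1];
      apply commute_sym;
      [change [(true, true)] with (winv [a2]) | change [(false, true)] with (winv [a1])];
      apply commute_winv_l, commute_sym; assumption. }
  intro v. induction v as [|x v IH].
  - unfold commute. now rewrite app_nil_r.
  - exact (commute_app_r m c [x] v (Hx x) IH).
Qed.

Lemma central_wpow m c k : central m c -> central m (wpow c k).
Proof. intros H v. apply commute_wpow_l, H. Qed.

Lemma Pi_S_r s t k : Pi s t (S k) = Pi s t k ++ [if Nat.even k then s else t].
Proof.
  revert s t. induction k as [|k IH]; intros s t; [reflexivity|].
  change (Pi s t (S (S k))) with (s :: Pi t s (S k)). rewrite IH.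
  rewrite Nat.even_succ, <- Nat.negb_even. now destruct (Nat.even k).
Qed.

Lemma Pi_double s t j : Pi s t (2 * j) = wrep [s; t] j.
Proof.
  induction j as [|j IH]; [reflexivity|].
  replace (2 * S j) with (S (S (2 * j))) by lia. simpl. now rewrite <- IH.
Qed.

Lemma Pi_double_S s t j : Pi s t (2 * j + 1) = wrep [s; t] j ++ [s].
Proof.
  induction j as [|j IH]; [reflexivity|].
  replace (2 * S j + 1) with (S (S (2 * j + 1))) by lia. simpl. now rewrite <- IH.
Qed.

Lemma wrep_pair_shift s t j : s :: wrep [t; s] j = wrep [s; t] j ++ [s].
Proof. induction j as [|j IH]; [reflexivity|]. simpl. now rewrite IH. Qed.

Lemma Delta_conj_a1 m :
  artin_eq (S m) ([a1] ++ Delta (S m)) (Delta (S m) ++ [if Nat.even m then a2 else a1]).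
Proof. unfold Delta. rewrite (ae_rel (S m)) at 1. now rewrite Pi_S_r. Qed.

Lemma Delta_conj_a2 m :
  artin_eq (S m) ([a2] ++ Delta (S m)) (Delta (S m) ++ [if Nat.even m then a1 else a2]).
Proof.
  unfold Delta. transitivity (Pi a2 a1 (S m) ++ [if Nat.even m then a1 else a2]).
  - now rewrite Pi_S_r.
  - now rewrite <- (ae_rel (S m)).
Qed.

(* Conjugation by Delta swaps a1 and a2 when m is odd and fixes them when m is even. *)
Lemma delta_central m : (1 <= m)%nat -> central m (delta m).
Proof.
  intro Hm. destruct m as [|m]; [lia|].
  pose proof (Delta_conj_a1 m) as H1. pose proof (Delta_conj_a2 m) as H2.
  unfold delta. rewrite Nat.odd_succ.
  destruct (Nat.even m); apply central_of_generators; unfold commute.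
  - rewrite <- app_assoc, <- H2, !app_assoc, <- H1. reflexivity.
  - rewrite <- app_assoc, <- H1, !app_assoc, <- H2. reflexivity.
  - now rewrite H1.
  - now rewrite H2.
Qed.

Lemma delta_pow_central m i : (1 <= m)%nat -> central m (wpow (delta m) i).
Proof. intro Hm. apply central_wpow, delta_central, Hm. Qed.

Local Open Scope Z_scope.

Notation syl := (bool * Z)%type.

Definition syl_eq_dec (x y : syl) : {x = y} + {x <> y}.
Proof. decide equality; [apply Z.eq_dec | apply bool_dec]. Defined.

Lemma prefix_dec (p l : list syl) : {r | l = p ++ r} + {forall r, l <> p ++ r}.
Proof.
  destruct (list_eq_dec syl_eq_dec (firstn (length p) l) p) as [E|E].
  - left. exists (skipn (length p) l). rewrite <- (firstn_skipn (length p) l) at 1. now rewrite E.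
  - right. intros r ->. apply E. now rewrite <- (Nat.add_0_r (length p)), firstn_app_2, app_nil_r.
Qed.

Lemma suffix_dec (p l : list syl) : {r | l = r ++ p} + {forall r, l <> r ++ p}.
Proof.
  destruct (prefix_dec (rev p) (rev l)) as [[r E]|N].
  - left. exists (rev r). now rewrite <- (rev_involutive l), E, rev_app_distr, rev_involutive.
  - right. intros r ->. apply (N (rev r)). now rewrite rev_app_distr.
Qed.

Lemma Z_mod_cases x M : 0 < M -> -M <= x < 2 * M ->
  (x < 0 /\ x mod M = x + M) \/ (0 <= x < M /\ x mod M = x) \/ (M <= x /\ x mod M = x - M).
Proof.
  intros HM Hx. destruct (Z_lt_le_dec x 0) as [H1|H1]; [left|right].
  - split; [lia|]. symmetry. apply Z.mod_unique_pos with (-1); lia.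
  - destruct (Z_lt_le_dec x M) as [H2|H2]; [left|right].
    + split; [lia|]. apply Z.mod_small. lia.
    + split; [lia|]. symmetry. apply Z.mod_unique_pos with 1; lia.
Qed.

Section FreeProductNormalForm.

(* The free product of two cyclic groups generated by x_false and x_true, of orders
   [ord false] and [ord true], where order 0 means infinite.  A syllable (b, e) stands
   for x_b ^ e, and an element is represented by its reduced syllable sequence. *)
Variable ord : bool -> Z.

Definition reduce_exp (b : bool) (e : Z) : Z :=
  if ord b =? 0 then e else e mod ord b.

Definition scons (b : bool) (e : Z) (t : list syl) : list syl :=
  if e =? 0 then t else (b, e) :: t.

Definition smul (x : syl) (t : list syl) : list syl :=
  let (b, e) := x in
  match t with
  | (b', e') :: t' =>
      if Bool.eqb b b' then scons b (reduce_exp b (e + e')) t'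
      else scons b (reduce_exp b e) t
  | [] => scons b (reduce_exp b e) []
  end.

Definition reduced_syl (x : syl) : Prop := reduce_exp (fst x) (snd x) = snd x /\ snd x <> 0.

Definition head_differs (b : bool) (t : list syl) : Prop :=
  match t with [] => True | (b', _) :: _ => b <> b' end.

Fixpoint reduced (t : list syl) : Prop :=
  match t with
  | [] => True
  | x :: t' => reduced_syl x /\ head_differs (fst x) t' /\ reduced t'
  end.

Definition nf_mul (s t : list syl) : list syl := fold_right smul t s.

Lemma scons_0 b t : scons b 0 t = t.
Proof. reflexivity. Qed.

Lemma scons_neq0 b e t : e <> 0 -> scons b e t = (b, e) :: t.
Proof. intro H. unfold scons. now rewrite (proj2 (Z.eqb_neq _ _) H). Qed.

Lemma smul_same b e e' t : smul (b, e) ((b, e') :: t) = scons b (reduce_exp b (e + e')) t.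
Proof. simpl. now rewrite eqb_reflx. Qed.

Lemma smul_diff b e b' e' t :
  b <> b' -> smul (b, e) ((b', e') :: t) = scons b (reduce_exp b e) ((b', e') :: t).
Proof. intro H. simpl. now rewrite (proj2 (eqb_false_iff _ _) H). Qed.

Lemma smul_nil b e : smul (b, e) [] = scons b (reduce_exp b e) [].
Proof. reflexivity. Qed.

Lemma reduce_exp_idem b e : reduce_exp b (reduce_exp b e) = reduce_exp b e.
Proof.
  unfold reduce_exp. destruct (ord b =? 0) eqn:E; [reflexivity|].
  apply Z.mod_mod, Z.eqb_neq, E.
Qed.

Lemma reduce_exp_add_l b x y : reduce_exp b (reduce_exp b x + y) = reduce_exp b (x + y).
Proof. unfold reduce_exp. destruct (ord b =? 0); [reflexivity|]. apply Zplus_mod_idemp_l. Qed.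

Lemma reduce_exp_add_r b x y : reduce_exp b (x + reduce_exp b y) = reduce_exp b (x + y).
Proof. unfold reduce_exp. destruct (ord b =? 0); [reflexivity|]. apply Zplus_mod_idemp_r. Qed.

Lemma reduce_exp_0 b : reduce_exp b 0 = 0.
Proof. unfold reduce_exp. destruct (ord b =? 0); [reflexivity|]. apply Zmod_0_l. Qed.

Lemma reduce_exp_pos b x : 0 < ord b -> reduce_exp b x = x mod ord b.
Proof. intro H. unfold reduce_exp. now rewrite (proj2 (Z.eqb_neq _ _)) by lia. Qed.

Lemma reduce_exp_inf b x : ord b = 0 -> reduce_exp b x = x.
Proof. intro H. unfold reduce_exp. now rewrite H. Qed.

Lemma scons_reduced b e t :
  reduced t -> head_differs b t -> reduce_exp b e = e -> reduced (scons b e t).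
Proof.
  intros Ht Hh He. unfold scons. destruct (e =? 0) eqn:E; [exact Ht|].
  repeat split; auto. now apply Z.eqb_neq.
Qed.

Lemma smul_reduced x t : reduced t -> reduced (smul x t).
Proof.
  intro Ht. destruct x as [b e], t as [|[b' e'] t']; simpl.
  - apply scons_reduced; simpl; auto using reduce_exp_idem.
  - destruct (Bool.eqb b b') eqn:E.
    + apply Bool.eqb_prop in E as <-. destruct Ht as [_ [Hh Ht]].
      apply scons_reduced; auto using reduce_exp_idem.
    + apply scons_reduced; auto using reduce_exp_idem.
      simpl. intros <-. now rewrite eqb_reflx in E.
Qed.

Lemma nf_mul_reduced s t : reduced t -> reduced (nf_mul s t).
Proof. intro Ht. induction s; simpl; auto using smul_reduced. Qed.

Lemma nf_mul_app s1 s2 t : nf_mul (s1 ++ s2) t = nf_mul s1 (nf_mul s2 t).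
Proof. apply fold_right_app. Qed.

Lemma nf_mul_cons x s t : nf_mul (x :: s) t = smul x (nf_mul s t).
Proof. reflexivity. Qed.

Lemma smul_reduce_exp b e t : smul (b, reduce_exp b e) t = smul (b, e) t.
Proof.
  destruct t as [|[b' e'] t']; simpl.
  - now rewrite reduce_exp_idem.
  - destruct (Bool.eqb b b'); [now rewrite reduce_exp_add_l | now rewrite reduce_exp_idem].
Qed.

Lemma smul_trivial b e t : reduce_exp b e = 0 -> reduced t -> smul (b, e) t = t.
Proof.
  intros He Ht. destruct t as [|[b' e'] t']; simpl; [now rewrite He|].
  destruct (Bool.eqb b b') eqn:E; [|now rewrite He].
  apply Bool.eqb_prop in E as <-. destruct Ht as [[H1 H2] _]. simpl in *.
  rewrite <- reduce_exp_add_l, He, Z.add_0_l, H1. now apply scons_neq0.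
Qed.

Lemma smul_scons_same b e1 e2 t : head_differs b t ->
  smul (b, e1) (scons b (reduce_exp b e2) t) = scons b (reduce_exp b (e1 + e2)) t.
Proof.
  intro Hh. destruct (Z.eq_dec (reduce_exp b e2) 0) as [E|E].
  - rewrite E, scons_0, <- reduce_exp_add_r, E, Z.add_0_r.
    destruct t as [|[b' e'] t']; [reflexivity|]. now apply smul_diff.
  - rewrite (scons_neq0 _ _ _ E), smul_same. now rewrite reduce_exp_add_r.
Qed.

Lemma smul_add b e1 e2 t : reduced t -> smul (b, e1) (smul (b, e2) t) = smul (b, e1 + e2) t.
Proof.
  intro Ht. destruct t as [|[b' e'] t'].
  - rewrite !smul_nil. now apply smul_scons_same.
  - destruct (bool_dec b b') as [<-|Hne].
    + destruct Ht as [_ [Hh _]]. rewrite !smul_same, <- (reduce_exp_idem b (e2 + e')).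
      rewrite smul_scons_same by exact Hh. now rewrite reduce_exp_add_r, Z.add_assoc.
    + rewrite !smul_diff by exact Hne. now apply smul_scons_same.
Qed.

Lemma smul_cancel b e1 e2 t :
  reduced t -> reduce_exp b (e1 + e2) = 0 -> smul (b, e1) (smul (b, e2) t) = t.
Proof. intros Ht He. rewrite smul_add by exact Ht. now apply smul_trivial. Qed.

Lemma smul_cancel_opp b e1 e2 t :
  reduced t -> e1 + e2 = 0 -> smul (b, e1) (smul (b, e2) t) = t.
Proof. intros Ht He. apply smul_cancel; [exact Ht|]. rewrite He. apply reduce_exp_0. Qed.

Lemma smul_same_cancel b e e' t : reduce_exp b (e + e') = 0 -> smul (b, e) ((b, e') :: t) = t.
Proof. intro H. now rewrite smul_same, H. Qed.

Lemma smul_reduced_cons x t : reduced_syl x -> head_differs (fst x) t -> smul x t = x :: t.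
Proof.
  destruct x as [b e]. intros [H1 H2] Hh. simpl in *.
  destruct t as [|[b' e'] t']; simpl.
  - rewrite H1. now apply scons_neq0.
  - rewrite (proj2 (eqb_false_iff _ _) Hh), H1. now apply scons_neq0.
Qed.

Lemma reduced_app_r g u : reduced (g ++ u) -> reduced u.
Proof. induction g; simpl; tauto. Qed.

Lemma reduced_app_l g u : reduced (g ++ u) -> reduced g.
Proof.
  induction g as [|x g IH]; simpl; [auto|]. intros [H1 [H2 H3]].
  split; [exact H1|split; [|auto]]. destruct g; simpl in *; auto.
Qed.

Lemma nf_mul_reduced_app g u : reduced (g ++ u) -> nf_mul g u = g ++ u.
Proof.
  induction g as [|x g IH]; simpl; [auto|]. intros [H1 [H2 H3]].
  rewrite IH by exact H3. now apply smul_reduced_cons.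
Qed.

Lemma nf_mul_nil_r g : reduced g -> nf_mul g [] = g.
Proof. intro H. rewrite nf_mul_reduced_app; [apply app_nil_r | now rewrite app_nil_r]. Qed.

Lemma smul_nf_mul x g t : reduced g -> reduced t -> smul x (nf_mul g t) = nf_mul (smul x g) t.
Proof.
  intros Hg Ht. destruct x as [b e], g as [|[b' e'] g'].
  - rewrite smul_nil. destruct (Z.eq_dec (reduce_exp b e) 0) as [E|E].
    + rewrite E, scons_0. now apply smul_trivial.
    + rewrite scons_neq0 by exact E. rewrite nf_mul_cons. now rewrite smul_reduce_exp.
  - destruct Hg as [_ [_ Hg']]. rewrite nf_mul_cons.
    assert (Hv : reduced (nf_mul g' t)) by now apply nf_mul_reduced.
    destruct (bool_dec b b') as [<-|Hne].
    + rewrite smul_add, smul_same by exact Hv.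
      destruct (Z.eq_dec (reduce_exp b (e + e')) 0) as [E|E].
      * rewrite E, scons_0. now apply smul_trivial.
      * rewrite scons_neq0 by exact E. rewrite nf_mul_cons. now rewrite smul_reduce_exp.
    + rewrite smul_diff by exact Hne.
      destruct (Z.eq_dec (reduce_exp b e) 0) as [E|E].
      * rewrite E, scons_0, nf_mul_cons. apply smul_trivial; auto using smul_reduced.
      * rewrite scons_neq0 by exact E. rewrite !nf_mul_cons. now rewrite smul_reduce_exp.
Qed.

Lemma nf_mul_nf_mul s t : reduced t -> nf_mul s t = nf_mul (nf_mul s []) t.
Proof.
  intro Ht. induction s as [|x s IH]; [reflexivity|].
  rewrite !nf_mul_cons, IH. apply smul_nf_mul; [apply nf_mul_reduced; exact I | exact Ht].
Qed.

Lemma head_differs_hd b u v : hd_error u = hd_error v -> head_differs b u -> head_differs b v.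
Proof.
  destruct u as [|[? ?] ?], v as [|[? ?] ?]; simpl; intro H; try discriminate; now inversion H.
Qed.

Lemma nf_mul_inf_hd k g : ord false = 0 -> reduced g -> g <> [] -> (forall e, g <> [(false, e)]) ->
  hd_error (nf_mul g [(false, k)]) = hd_error g.
Proof.
  intro Hinf. induction g as [|[b e] g' IH]; intros Hg Hne Hs; [congruence|].
  destruct Hg as [Hok [Hh Hg']]. simpl in Hh.
  rewrite nf_mul_cons, smul_reduced_cons; [reflexivity | exact Hok|]. simpl fst.
  destruct g' as [|[b' e'] g''].
  - destruct b; [simpl; congruence|]. exfalso. now apply (Hs e).
  - destruct (bool_dec b' false) as [->|Hb'].
    + destruct g'' as [|y g3].
      * cbn [nf_mul fold_right]. rewrite smul_same. unfold scons.
        destruct (reduce_exp false (e' + k) =? 0); simpl; auto.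
      * apply (head_differs_hd b ((false, e') :: y :: g3)); [|exact Hh].
        symmetry. apply IH; auto; congruence.
    + apply (head_differs_hd b ((b', e') :: g'')); [|exact Hh].
      symmetry. apply IH; auto; congruence.
Qed.

Lemma smul_inf_hd k g : ord false = 0 -> k <> 0 -> reduced g -> g <> [] ->
  hd_error (smul (false, k) g) <> hd_error g.
Proof.
  intros Hinf Hk Hg Hne. destruct g as [|[b e] g']; [congruence|].
  destruct Hg as [Hok [Hh Hg']]. simpl in Hh.
  destruct b.
  - rewrite smul_diff, reduce_exp_inf, scons_neq0 by (congruence || exact Hinf || exact Hk).
    simpl. congruence.
  - rewrite smul_same, reduce_exp_inf by exact Hinf.
    destruct (Z.eq_dec (k + e) 0) as [E|E].
    + rewrite E, scons_0. destruct g' as [|[b' e'] g'']; simpl in *; congruence.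
    + rewrite scons_neq0 by exact E. simpl. intro C. inversion C. lia.
Qed.

Lemma nf_mul_inf_commute k g : ord false = 0 -> k <> 0 -> reduced g ->
  nf_mul g [(false, k)] = smul (false, k) g -> g = [] \/ exists e, g = [(false, e)].
Proof.
  intros Hinf Hk Hg E.
  destruct g as [|[b e] g']; [now left|].
  destruct (bool_dec b false) as [->|Hb]; [destruct g' as [|y g'']; [right; now exists e|]|].
  all: exfalso; apply (smul_inf_hd k _ Hinf Hk Hg); [congruence|].
  all: rewrite <- E; apply nf_mul_inf_hd; auto; [congruence | intros e0 C; inversion C; congruence].
Qed.

Lemma reduced_last_two h l' l : reduced (h ++ [l'; l]) -> reduced_syl l' /\ fst l' <> fst l.
Proof.
  induction h as [|x h IH]; simpl.
  - destruct l as [b e]. intros [H1 [H2 _]]. simpl in H2. auto.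
  - intros [_ [_ H]]. auto.
Qed.

Lemma reduced_snoc_replace g0 l u e r :
  reduced (g0 ++ [l]) -> reduced u -> u = (fst l, e) :: r -> reduced (g0 ++ u).
Proof.
  intros H Hu Eu. induction g0 as [|x g0 IH]; simpl in *; [exact Hu|].
  destruct H as [H1 [H2 H3]]. split; [exact H1|]. split; [|auto].
  destruct g0 as [|y g0]; simpl in *.
  - rewrite Eu. destruct l; simpl in *; auto.
  - exact H2.
Qed.

Lemma nf_mul_snoc_hd x g0 l u e r : reduced ((x :: g0) ++ [l]) -> reduced u ->
  smul l u = (fst l, e) :: r -> hd_error (nf_mul ((x :: g0) ++ [l]) u) = Some x.
Proof.
  intros Hg Hu Hl. rewrite nf_mul_app. change (nf_mul [l] u) with (smul l u). rewrite Hl.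
  rewrite nf_mul_reduced_app; [reflexivity|].
  apply (reduced_snoc_replace _ l _ e r Hg); [rewrite <- Hl; now apply smul_reduced | reflexivity].
Qed.

End FreeProductNormalForm.

(* The images of the generators in A / <delta>: for m odd, x_false = Delta (of order 2)
   and x_true = a1 a2 (of order m), with a1 = x_true^(-n) x_false where m = 2n + 1;
   for m = 2n, x_false = a1 (of infinite order) and x_true = a1 a2 (of order n). *)
Definition qord (m : nat) (b : bool) : Z :=
  if Nat.odd m then (if b then Z.of_nat m else 2)
  else (if b then Z.of_nat (Nat.div2 m) else 0).

Definition qimg (m : nat) (x : letter) : list syl :=
  let n := Z.of_nat (Nat.div2 m) in
  if Nat.odd m then
    match x with
    | (false, false) => [(true, - n); (false, 1)]
    | (false, true) => [(false, -1); (true, n)]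
    | (true, false) => [(false, -1); (true, n + 1)]
    | (true, true) => [(true, - (n + 1)); (false, 1)]
    end
  else
    match x with
    | (false, false) => [(false, 1)]
    | (false, true) => [(false, -1)]
    | (true, false) => [(false, -1); (true, 1)]
    | (true, true) => [(true, -1); (false, 1)]
    end.

Definition qact (m : nat) (w : word) (t : list syl) : list syl :=
  nf_mul (qord m) (flat_map (qimg m) w) t.

Definition qnf (m : nat) (w : word) : list syl := qact m w [].

Lemma qact_app m u v t : qact m (u ++ v) t = qact m u (qact m v t).
Proof. unfold qact. now rewrite flat_map_app, nf_mul_app. Qed.

Lemma qact_cons m x w t : qact m (x :: w) t = nf_mul (qord m) (qimg m x) (qact m w t).
Proof. unfold qact. simpl flat_map. now rewrite nf_mul_app. Qed.

Lemma qact_reduced m w t : reduced (qord m) t -> reduced (qord m) (qact m w t).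
Proof. apply nf_mul_reduced. Qed.

Lemma qnf_reduced m w : reduced (qord m) (qnf m w).
Proof. now apply qact_reduced. Qed.

Lemma qact_qnf m w t : reduced (qord m) t -> qact m w t = nf_mul (qord m) (qnf m w) t.
Proof. apply nf_mul_nf_mul. Qed.

Lemma parity_cases m : (2 <= m)%nat ->
  (exists j, m = (2 * j)%nat /\ (1 <= j)%nat) \/ (exists j, m = (2 * j + 1)%nat /\ (1 <= j)%nat).
Proof.
  intro H. pose proof (Nat.div2_odd m) as E. destruct (Nat.odd m); simpl in E.
  - right. exists (Nat.div2 m). split; lia.
  - left. exists (Nat.div2 m). split; lia.
Qed.

Lemma odd_double j : Nat.odd (2 * j) = false.
Proof. rewrite <- Nat.negb_even, Nat.even_mul. reflexivity. Qed.

Lemma odd_double_S j : Nat.odd (2 * j + 1) = true.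
Proof. rewrite Nat.odd_add, Nat.odd_mul. reflexivity. Qed.

Lemma div2_double_S j : Nat.div2 (2 * j + 1) = j.
Proof. replace (2 * j + 1)%nat with (S (2 * j)) by lia. apply Nat.div2_succ_double. Qed.

Lemma qord_double j b : qord (2 * j) b = if b then Z.of_nat j else 0.
Proof. unfold qord. now rewrite odd_double, Nat.div2_double. Qed.

Lemma qord_double_S j b : qord (2 * j + 1) b = if b then 2 * Z.of_nat j + 1 else 2.
Proof. unfold qord. rewrite odd_double_S. destruct b; lia. Qed.

Lemma qimg_double j x : qimg (2 * j) x =
  match x with
  | (false, false) => [(false, 1)]
  | (false, true) => [(false, -1)]
  | (true, false) => [(false, -1); (true, 1)]
  | (true, true) => [(true, -1); (false, 1)]
  end.
Proof. unfold qimg. now rewrite odd_double. Qed.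

Lemma qimg_double_S j x : qimg (2 * j + 1) x =
  let n := Z.of_nat j in
  match x with
  | (false, false) => [(true, - n); (false, 1)]
  | (false, true) => [(false, -1); (true, n)]
  | (true, false) => [(false, -1); (true, n + 1)]
  | (true, true) => [(true, - (n + 1)); (false, 1)]
  end.
Proof. unfold qimg. now rewrite odd_double_S, div2_double_S. Qed.

Lemma reduce_double_false j x : reduce_exp (qord (2 * j)) false x = x.
Proof. apply reduce_exp_inf. now rewrite qord_double. Qed.

Lemma reduce_double_true j x :
  (1 <= j)%nat -> reduce_exp (qord (2 * j)) true x = x mod Z.of_nat j.
Proof. intro Hj. rewrite reduce_exp_pos; rewrite qord_double; [reflexivity | lia]. Qed.

Lemma reduce_double_S_false j x : reduce_exp (qord (2 * j + 1)) false x = x mod 2.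
Proof. rewrite reduce_exp_pos; rewrite qord_double_S; [reflexivity | lia]. Qed.

Lemma reduce_double_S_true j x :
  reduce_exp (qord (2 * j + 1)) true x = x mod (2 * Z.of_nat j + 1).
Proof. rewrite reduce_exp_pos; rewrite qord_double_S; [reflexivity | lia]. Qed.

Ltac solve_reduced :=
  solve [repeat (apply smul_reduced || apply nf_mul_reduced || apply qact_reduced || exact I);
         auto].

Ltac unfold_qact :=
  unfold qact, nf_mul, a1, a2, linv; cbn [flat_map app fst snd negb];
  rewrite ?qimg_double, ?qimg_double_S; cbn [app fold_right].

Lemma qact_wrep m u b e k t :
  (forall X, reduced (qord m) X -> qact m u X = smul (qord m) (b, e) X) ->
  reduced (qord m) t -> qact m (wrep u k) t = smul (qord m) (b, Z.of_nat k * e) t.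
Proof.
  intros Hu Ht. induction k as [|k IH]; simpl wrep.
  - symmetry. apply smul_trivial, Ht. apply reduce_exp_0.
  - rewrite qact_app, IH, Hu, smul_add by solve_reduced. f_equal. f_equal. lia.
Qed.

Lemma qact_wrep_conj m u c d k t :
  (forall X, reduced (qord m) X ->
     qact m u X = smul (qord m) (c, -1) (smul (qord m) (d, 1) (smul (qord m) (c, 1) X))) ->
  reduced (qord m) t ->
  qact m (wrep u k) t =
    smul (qord m) (c, -1) (smul (qord m) (d, Z.of_nat k) (smul (qord m) (c, 1) t)).
Proof.
  intros Hu Ht. induction k as [|k IH]; simpl wrep.
  - rewrite (smul_trivial _ d 0) by (apply reduce_exp_0 || solve_reduced).
    symmetry. apply smul_cancel_opp; [exact Ht | lia].
  - rewrite qact_app, IH, Hu by solve_reduced.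
    rewrite smul_cancel_opp, smul_add by (solve_reduced || lia).
    f_equal. f_equal. f_equal. lia.
Qed.

Lemma qact_a1a2 m X : (2 <= m)%nat -> reduced (qord m) X ->
  qact m [a1; a2] X = smul (qord m) (true, 1) X.
Proof.
  intros Hm HX. destruct (parity_cases m Hm) as [[j [-> Hj]]|[j [-> Hj]]]; unfold_qact.
  - now rewrite smul_cancel_opp by (solve_reduced || lia).
  - rewrite smul_cancel_opp, smul_add by (solve_reduced || lia). do 2 f_equal. lia.
Qed.

Lemma qact_rel m t : (2 <= m)%nat -> reduced (qord m) t ->
  qact m (Pi a1 a2 m) t = qact m (Pi a2 a1 m) t.
Proof.
  intros Hm Ht. destruct (parity_cases m Hm) as [[j [-> Hj]]|[j [-> Hj]]].
  - rewrite !Pi_double.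
    rewrite (qact_wrep _ [a1; a2] true 1) by (auto using qact_a1a2).
    rewrite (qact_wrep_conj _ [a2; a1] false true) by (try intros; unfold_qact; auto).
    assert (Hz : reduce_exp (qord (2 * j)) true (Z.of_nat j) = 0).
    { rewrite reduce_double_true by exact Hj. apply Z_mod_same_full. }
    rewrite Z.mul_1_r, !(smul_trivial _ true (Z.of_nat j)) by (solve_reduced || exact Hz).
    symmetry. apply smul_cancel_opp; [exact Ht | lia].
  - rewrite !Pi_double_S, !qact_app.
    rewrite (qact_wrep _ [a1; a2] true 1) by (auto using qact_a1a2; solve_reduced).
    rewrite (qact_wrep_conj _ [a2; a1] false true) by
      (try solve_reduced; intros X HX; unfold_qact;
       rewrite smul_add by solve_reduced; do 3 f_equal; lia).
    unfold_qact.
    rewrite smul_cancel_opp, smul_cancel_opp, smul_add by (solve_reduced || lia).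
    rewrite (smul_trivial _ true) by
      (solve_reduced || (rewrite reduce_double_S_true, <- (Z_mod_same_full (2 * Z.of_nat j + 1));
                         f_equal; lia)).
    rewrite <- (smul_reduce_exp _ false (-1)), <- (smul_reduce_exp _ false 1).
    now rewrite !reduce_double_S_false.
Qed.

Lemma qact_free m x t : (2 <= m)%nat -> reduced (qord m) t -> qact m [x; linv x] t = t.
Proof.
  intros Hm Ht. destruct (parity_cases m Hm) as [[j [-> Hj]]|[j [-> Hj]]];
    destruct x as [[|] [|]]; unfold_qact;
    repeat (rewrite smul_cancel_opp by (solve_reduced || lia)); reflexivity.
Qed.

Lemma qact_artin_eq m u v : (2 <= m)%nat -> artin_eq m u v ->
  forall t, reduced (qord m) t -> qact m u t = qact m v t.
Proof.
  intros Hm H. induction H as [| u v _ IH | u v w _ IH1 _ IH2 | p q u v _ IH | x |];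
    intros t Ht.
  - reflexivity.
  - symmetry. now apply IH.
  - rewrite IH1, IH2 by solve_reduced. reflexivity.
  - rewrite !qact_app, IH by solve_reduced. reflexivity.
  - now apply qact_free.
  - now apply qact_rel.
Qed.

Definition qgen (m : nat) (b : bool) : word :=
  if b then [a1; a2] else (if Nat.odd m then Delta m else [a1]).

Definition qsyl_word (m : nat) (x : syl) : word := wpow (qgen m (fst x)) (snd x).

Definition qlift (m : nat) (g : list syl) : word := flat_map (qsyl_word m) g.

Lemma qord_nonneg m b : 0 <= qord m b.
Proof. unfold qord. destruct (Nat.odd m), b; try lia; apply Nat2Z.is_nonneg. Qed.

Lemma Pi_double_S_app s t j : Pi s t (2 * j + 1) ++ Pi t s (2 * j + 1) = wrep [s; t] (2 * j + 1).
Proof.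
  rewrite !Pi_double_S, <- app_assoc, (app_assoc [s]).
  change ([s] ++ wrep [t; s] j) with (s :: wrep [t; s] j).
  rewrite wrep_pair_shift, <- (app_assoc _ [s] [t]), app_assoc, <- wrep_add.
  replace (2 * j + 1)%nat with (S (j + j)) by lia. now rewrite wrep_S_r.
Qed.

Lemma qgen_order m b : (2 <= m)%nat -> qord m b <> 0 ->
  artin_eq m (wpow (qgen m b) (qord m b)) (delta m).
Proof.
  intros Hm Hb. unfold qgen, delta, Delta.
  destruct (parity_cases m Hm) as [[j [-> Hj]]|[j [-> Hj]]];
    rewrite ?odd_double, ?odd_double_S; rewrite ?qord_double, ?qord_double_S in *; destruct b.
  - now rewrite wpow_of_nat, Pi_double.
  - congruence.
  - replace (2 * Z.of_nat j + 1) with (Z.of_nat (2 * j + 1)) by lia.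
    rewrite wpow_of_nat, <- Pi_double_S_app, <- ae_rel. reflexivity.
  - change (wpow ?w 2) with (wrep w 2). cbn [wrep]. now rewrite app_nil_r.
Qed.

Lemma qsyl_word_reduce m b e : (2 <= m)%nat -> exists i,
  artin_eq m (qsyl_word m (b, e)) (qsyl_word m (b, reduce_exp (qord m) b e) ++ wpow (delta m) i).
Proof.
  intro Hm. unfold qsyl_word. simpl.
  destruct (Z.eq_dec (qord m b) 0) as [E|E].
  - exists 0. rewrite reduce_exp_inf by exact E. change (wpow (delta m) 0) with (@nil letter).
    now rewrite app_nil_r.
  - exists (e / qord m b). rewrite reduce_exp_pos by (pose proof (qord_nonneg m b); lia).
    rewrite (Z.div_mod e (qord m b)) at 1 by exact E.
    rewrite Z.add_comm, wpow_add, <- wpow_mul, qgen_order by auto. reflexivity.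
Qed.

Lemma qlift_scons m b e t : artin_eq m (qlift m (scons b e t)) (qsyl_word m (b, e) ++ qlift m t).
Proof.
  destruct (Z.eq_dec e 0) as [->|H]; [reflexivity|].
  now rewrite scons_neq0.
Qed.

Lemma qlift_smul m x g : (2 <= m)%nat -> exists i,
  artin_eq m (qsyl_word m x ++ qlift m g) (qlift m (smul (qord m) x g) ++ wpow (delta m) i).
Proof.
  intro Hm.
  assert (Hc : forall i, central m (wpow (delta m) i)) by (intro; apply delta_pow_central; lia).
  destruct x as [b e], g as [|[b' e'] g'].
  - rewrite smul_nil. destruct (qsyl_word_reduce m b e Hm) as [i Hi]. exists i.
    rewrite qlift_scons, Hi. simpl qlift. now rewrite !app_nil_r.
  - destruct (bool_dec b b') as [<-|Hne].
    + rewrite smul_same. destruct (qsyl_word_reduce m b (e + e') Hm) as [i Hi]. exists i.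
      rewrite qlift_scons. cbn [qlift flat_map]. rewrite app_assoc.
      unfold qsyl_word at 1 2. simpl fst; simpl snd. rewrite <- wpow_add.
      change (wpow (qgen m b) (e + e')) with (qsyl_word m (b, e + e')).
      rewrite Hi, <- !app_assoc, (Hc i). reflexivity.
    + rewrite smul_diff by exact Hne. destruct (qsyl_word_reduce m b e Hm) as [i Hi]. exists i.
      rewrite qlift_scons, Hi, <- !app_assoc, (Hc i). reflexivity.
Qed.

Lemma qlift_nf_mul m l g : (2 <= m)%nat -> exists i,
  artin_eq m (qlift m l ++ qlift m g) (qlift m (nf_mul (qord m) l g) ++ wpow (delta m) i).
Proof.
  intro Hm. induction l as [|x l [i IH]].
  - exists 0. simpl. now rewrite app_nil_r.
  - destruct (qlift_smul m x (nf_mul (qord m) l g) Hm) as [i' Hi']. exists (i' + i).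
    rewrite nf_mul_cons. cbn [qlift flat_map].
    rewrite <- app_assoc, IH, app_assoc, Hi', wpow_add, app_assoc. reflexivity.
Qed.

Lemma qlift_qimg m x : (2 <= m)%nat -> artin_eq m [x] (qlift m (qimg m x)).
Proof.
  intro Hm. unfold qlift, qsyl_word, qgen.
  destruct (parity_cases m Hm) as [[j [Em Hj]]|[j [Em Hj]]].
  - replace (qimg m x) with (qimg (2 * j) x) by now rewrite Em.
    replace (Nat.odd m) with false by (rewrite Em; now rewrite odd_double).
    rewrite qimg_double. destruct x as [[|] [|]]; vm_compute;
      rewrite ?artin_eq_cancel_pair; reflexivity.
  - replace (qimg m x) with (qimg (2 * j + 1) x) by now rewrite Em.
    replace (Nat.odd m) with true by (rewrite Em; now rewrite odd_double_S).
    assert (HD : Delta m = wpow [a1; a2] (Z.of_nat j) ++ [a1])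
      by now rewrite Em, wpow_of_nat; unfold Delta; rewrite Pi_double_S.
    rewrite qimg_double_S, HD. set (n := Z.of_nat j).
    destruct x as [[|] [|]]; cbn [flat_map fst snd]; rewrite ?app_nil_r.
    + rewrite wpow_1, app_assoc, <- wpow_add.
      replace (- (n + 1) + n) with (-1) by lia. rewrite wpow_m1. vm_compute.
      now rewrite artin_eq_cancel_pair.
    + rewrite wpow_m1, winv_app, winv_wpow, <- app_assoc, <- wpow_add.
      replace (- n + (n + 1)) with 1 by lia. rewrite wpow_1. vm_compute.
      now rewrite artin_eq_cancel_pair.
    + rewrite wpow_m1, winv_app, winv_wpow, <- app_assoc, <- wpow_add.
      replace (- n + n) with 0 by lia. reflexivity.
    + rewrite wpow_1, app_assoc, <- wpow_add.
      replace (- n + n) with 0 by lia. reflexivity.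
Qed.

Lemma qlift_qnf m w : (2 <= m)%nat ->
  exists i, artin_eq m w (qlift m (qnf m w) ++ wpow (delta m) i).
Proof.
  intro Hm. induction w as [|x w [i IH]].
  - exists 0. reflexivity.
  - destruct (qlift_nf_mul m (qimg m x) (qnf m w) Hm) as [i' Hi']. exists (i' + i).
    unfold qnf. rewrite qact_cons. fold (qnf m w).
    transitivity ([x] ++ (qlift m (qnf m w) ++ wpow (delta m) i)); [now rewrite <- IH|].
    rewrite (qlift_qimg m x Hm), app_assoc, Hi', wpow_add, app_assoc. reflexivity.
Qed.

Lemma qact_winv_l m u t : (2 <= m)%nat -> reduced (qord m) t -> qact m (winv u) (qact m u t) = t.
Proof. intros Hm Ht. now rewrite <- qact_app, (qact_artin_eq m _ [] Hm (app_winv_l m u)). Qed.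

Lemma qact_winv m u b e t : (2 <= m)%nat ->
  (forall X, reduced (qord m) X -> qact m u X = smul (qord m) (b, e) X) ->
  reduced (qord m) t -> qact m (winv u) t = smul (qord m) (b, - e) t.
Proof.
  intros Hm Hu Ht.
  rewrite <- (smul_cancel_opp (qord m) b e (- e) t) at 1 by (auto; lia).
  rewrite <- Hu by solve_reduced. apply qact_winv_l; solve_reduced.
Qed.

Lemma qact_wpow m u b e k t : (2 <= m)%nat ->
  (forall X, reduced (qord m) X -> qact m u X = smul (qord m) (b, e) X) ->
  reduced (qord m) t -> qact m (wpow u k) t = smul (qord m) (b, k * e) t.
Proof.
  intros Hm Hu Ht. destruct (Z_le_gt_dec 0 k).
  - replace k with (Z.of_nat (Z.to_nat k)) at 1 by lia.
    rewrite wpow_of_nat, (qact_wrep m u b e) by auto. now rewrite Z2Nat.id by lia.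
  - replace k with (- Z.of_nat (Z.to_nat (- k))) at 1 by lia.
    rewrite wpow_opp_of_nat, (qact_wrep m (winv u) b (- e)).
    + rewrite Z2Nat.id by lia. do 2 f_equal. ring.
    + intros X HX. now apply qact_winv.
    + exact Ht.
Qed.

Lemma qact_a1_double j X : qact (2 * j) [a1] X = smul (qord (2 * j)) (false, 1) X.
Proof. now unfold_qact. Qed.

Lemma qact_Delta_double_S j t : (1 <= j)%nat -> reduced (qord (2 * j + 1)) t ->
  qact (2 * j + 1) (Delta (2 * j + 1)) t = smul (qord (2 * j + 1)) (false, 1) t.
Proof.
  intros Hj Ht. unfold Delta. rewrite Pi_double_S, qact_app.
  rewrite (qact_wrep _ [a1; a2] true 1)
    by (solve_reduced || (intros; apply qact_a1a2; [lia | assumption])).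
  unfold_qact. now rewrite smul_cancel_opp by (solve_reduced || lia).
Qed.

Lemma qact_delta m t : (2 <= m)%nat -> reduced (qord m) t -> qact m (delta m) t = t.
Proof.
  intros Hm Ht. unfold delta.
  destruct (parity_cases m Hm) as [[j [-> Hj]]|[j [-> Hj]]].
  - rewrite odd_double. unfold Delta. rewrite Pi_double.
    rewrite (qact_wrep _ [a1; a2] true 1) by (auto using qact_a1a2).
    apply smul_trivial; [|exact Ht].
    rewrite reduce_double_true, Z.mul_1_r by exact Hj. apply Z_mod_same_full.
  - rewrite odd_double_S, qact_app, !qact_Delta_double_S by (auto; solve_reduced).
    apply smul_cancel; [exact Ht|]. now rewrite reduce_double_S_false.
Qed.

Lemma qact_delta_pow m p t : (2 <= m)%nat -> reduced (qord m) t -> qact m (wpow (delta m) p) t = t.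
Proof.
  intros Hm Ht.
  rewrite (qact_wpow m (delta m) false 0) by
    (auto; intros X HX; rewrite qact_delta by auto; symmetry;
     apply smul_trivial; auto using reduce_exp_0).
  apply smul_trivial; [|exact Ht]. rewrite Z.mul_0_r. apply reduce_exp_0.
Qed.

Definition in_delta_a1 (m : nat) (w : word) : Prop :=
  exists p q, artin_eq m w (wpow (delta m) p ++ wpow [a1] q).

Lemma in_delta_a1_artin_eq m u v : artin_eq m u v -> in_delta_a1 m v -> in_delta_a1 m u.
Proof. intros H [p [q Hv]]. exists p, q. now rewrite H. Qed.

Lemma in_delta_a1_app_delta_pow m w i : (2 <= m)%nat ->
  in_delta_a1 m w -> in_delta_a1 m (w ++ wpow (delta m) i).
Proof.
  intros Hm [p [q Hw]]. exists (p + i), q.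
  rewrite Hw, <- app_assoc, <- (delta_pow_central m i ltac:(lia)), wpow_add, app_assoc. reflexivity.
Qed.

Lemma in_delta_a1_a1_pow_app m r w : (2 <= m)%nat ->
  in_delta_a1 m w -> in_delta_a1 m (wpow [a1] r ++ w).
Proof.
  intros Hm [p [q Hw]]. exists p, (r + q).
  rewrite Hw, app_assoc, <- (delta_pow_central m p ltac:(lia)), <- app_assoc, <- wpow_add.
  reflexivity.
Qed.

Lemma in_delta_a1_app_a1_pow m r w : in_delta_a1 m w -> in_delta_a1 m (w ++ wpow [a1] r).
Proof. intros [p [q Hw]]. exists p, (q + r). now rewrite Hw, <- app_assoc, <- wpow_add. Qed.

Lemma in_delta_a1_of_qlift m w : (2 <= m)%nat ->
  in_delta_a1 m (qlift m (qnf m w)) -> in_delta_a1 m w.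
Proof.
  intros Hm Hg. destruct (qlift_qnf m w Hm) as [i Hi].
  apply (in_delta_a1_artin_eq m _ _ Hi). now apply in_delta_a1_app_delta_pow.
Qed.

Lemma commute_a1_pow m k x : x = a1 \/ x = linv a1 -> commute m [x] (wpow [a1] k).
Proof.
  intro Hx. apply commute_sym, commute_wpow_l. unfold commute.
  destruct Hx as [-> | ->]; [reflexivity|].
  cbn. rewrite (ae_free m a1). symmetry. apply ae_free_inv.
Qed.

Lemma centralizer_a1_pow_double j k w : (1 <= j)%nat -> k <> 0 ->
  commute (2 * j) w (wpow [a1] k) -> in_delta_a1 (2 * j) w.
Proof.
  intros Hj Hk H. assert (Hm : (2 <= 2 * j)%nat) by lia.
  pose proof (qact_artin_eq _ _ _ Hm H [] I) as E.
  rewrite !qact_app, !(qact_wpow _ [a1] false 1) in E by (auto using qact_a1_double; solve_reduced).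
  rewrite Z.mul_1_r, qact_qnf in E by solve_reduced.
  rewrite smul_nil, reduce_double_false, scons_neq0 in E by exact Hk.
  apply in_delta_a1_of_qlift; [exact Hm|].
  destruct (nf_mul_inf_commute (qord (2 * j)) k (qnf (2 * j) w)) as [-> | [e ->]];
    [now rewrite qord_double | exact Hk | apply qnf_reduced | exact E | exists 0, 0; reflexivity |].
  exists 0, e. unfold qlift, qsyl_word, qgen. cbn [flat_map fst snd].
  now rewrite odd_double, app_nil_r.
Qed.

Section OddCentralizer.

Variable j : nat.
Hypothesis j_pos : (1 <= j)%nat.

Local Notation m := (2 * j + 1)%nat.
Local Notation N := (Z.of_nat j).

(* With x = x_false and y = x_true, a1 = y^(N+1) x and a1^-1 = x y^N. *)
Local Notation a1_nf := [(true, N + 1); (false, 1)].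
Local Notation a1_inv_nf := [(false, 1); (true, N)].

Lemma qact_a1_odd X : qact m [a1] X = smul (qord m) (true, - N) (smul (qord m) (false, 1) X).
Proof. now unfold_qact. Qed.

Lemma qact_a1_inv_odd X :
  qact m [linv a1] X = smul (qord m) (false, -1) (smul (qord m) (true, N) X).
Proof. now unfold_qact. Qed.

Lemma reduced_syl_false e : reduced_syl (qord m) (false, e) -> e = 1.
Proof.
  intros [H1 H2]. cbn [fst snd] in H1, H2. rewrite reduce_double_S_false in H1.
  pose proof (Z.mod_pos_bound e 2 ltac:(lia)). lia.
Qed.

Lemma reduced_syl_true c : reduced_syl (qord m) (true, c) -> 1 <= c <= 2 * N.
Proof.
  intros [H1 H2]. cbn [fst snd] in H1, H2. rewrite reduce_double_S_true in H1.
  pose proof (Z.mod_pos_bound c (2 * N + 1) ltac:(lia)). lia.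
Qed.

Lemma reduced_syl_false_1 : reduced_syl (qord m) (false, 1).
Proof. split; cbn [fst snd]; [now rewrite reduce_double_S_false | lia]. Qed.

Lemma opp_N_mod : (- N) mod (2 * N + 1) = N + 1.
Proof. symmetry. apply Z.mod_unique_pos with (-1); lia. Qed.

Lemma qact_a1_cons X : reduced (qord m) X -> head_differs false X ->
  qact m [a1] X = (true, N + 1) :: (false, 1) :: X.
Proof.
  intros HX Hh. rewrite qact_a1_odd, (smul_reduced_cons _ (false, 1))
    by (exact reduced_syl_false_1 || exact Hh).
  rewrite smul_diff, reduce_double_S_true, opp_N_mod by congruence. apply scons_neq0. lia.
Qed.

Lemma qact_a1_false : qact m [a1] [(false, 1)] = [(true, N + 1)].
Proof.
  rewrite qact_a1_odd, smul_same, reduce_double_S_false, scons_0, smul_nil.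
  rewrite reduce_double_S_true, opp_N_mod. apply scons_neq0. lia.
Qed.

Lemma qact_a1_false_true c t : reduced (qord m) ((false, 1) :: (true, c) :: t) -> c <> N ->
  exists c', qact m [a1] ((false, 1) :: (true, c) :: t) = (true, c') :: t.
Proof.
  intros [_ [_ [Hc _]]] HcN. apply reduced_syl_true in Hc.
  rewrite qact_a1_odd, smul_same, reduce_double_S_false, scons_0, smul_same, reduce_double_S_true.
  eexists. apply scons_neq0.
  destruct (Z_mod_cases (- N + c) (2 * N + 1)) as [[? ->]|[[? ->]|[? ->]]]; lia.
Qed.

Lemma qnf_a1_pow i : exists X,
  qnf m (wrep [a1] (S i)) = (true, N + 1) :: (false, 1) :: X /\
  head_differs false X /\ reduced (qord m) X.
Proof.
  induction i as [|i [X [HX [Hh HvX]]]].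
  - exists []. split; [|split; exact I]. apply qact_a1_cons; exact I.
  - exists ((true, N + 1) :: (false, 1) :: X).
    assert (Hv : reduced (qord m) ((true, N + 1) :: (false, 1) :: X))
      by (rewrite <- HX; apply qnf_reduced).
    split; [|split; [simpl; congruence | exact Hv]].
    unfold qnf. change (wrep [a1] (S (S i))) with ([a1] ++ wrep [a1] (S i)).
    rewrite qact_app. fold (qnf m (wrep [a1] (S i))). rewrite HX.
    apply qact_a1_cons; [exact Hv | simpl; congruence].
Qed.

Lemma qact_a1_pow_hd g i : reduced (qord m) g -> g <> [] -> (forall r, g <> a1_inv_nf ++ r) ->
  exists c r, qact m (wrep [a1] (S i)) g = (true, c) :: r /\ (head_differs false g -> c = N + 1).
Proof.
  intros Hg Hne HA. induction i as [|i [c [r [HY Hc]]]].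
  - change (wrep [a1] 1) with [a1].
    destruct g as [|[[|] e] g']; [congruence| |].
    + exists (N + 1), ((false, 1) :: (true, e) :: g'). split; [|auto].
      apply qact_a1_cons; [exact Hg | simpl; congruence].
    + destruct Hg as [Hok [Hh Hg']]. apply reduced_syl_false in Hok as ->.
      destruct g' as [|[[|] c] t]; simpl in Hh; [| |congruence].
      * exists (N + 1), []. split; [exact qact_a1_false | auto].
      * destruct (qact_a1_false_true c t) as [c' Hc'].
        -- split; [exact reduced_syl_false_1 | split; [simpl; congruence | exact Hg']].
        -- intros ->. now apply (HA t).
        -- exists c', t. split; [exact Hc' | simpl; congruence].
  - exists (N + 1), ((false, 1) :: (true, c) :: r). split; [|auto].
    change (wrep [a1] (S (S i))) with ([a1] ++ wrep [a1] (S i)). rewrite qact_app, HY.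
    apply qact_a1_cons; [rewrite <- HY; solve_reduced | simpl; congruence].
Qed.

Lemma smul_a1_nf l X : reduced_syl (qord m) l -> l <> (true, N) ->
  exists e r, smul (qord m) l ((true, N + 1) :: (false, 1) :: X) = (fst l, e) :: r.
Proof.
  intros Hl HlN. destruct l as [[|] e].
  - pose proof (reduced_syl_true e Hl).
    rewrite smul_same, reduce_double_S_true. do 2 eexists. apply scons_neq0.
    assert (e <> N) by congruence.
    destruct (Z_mod_cases (e + (N + 1)) (2 * N + 1)) as [[? ->]|[[? ->]|[? ->]]]; lia.
  - apply reduced_syl_false in Hl as ->.
    rewrite smul_diff, reduce_double_S_false by congruence.
    do 2 eexists. apply scons_neq0. now rewrite Z.mod_small by lia.
Qed.

(* Comparing the first syllables of g a1^k and a1^k g forces g to begin with a1, with a1^-1,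
   or to end with a1^-1. *)
Lemma a1_pow_not_commute g i : reduced (qord m) g -> g <> [] ->
  (forall r, g <> a1_nf ++ r) -> (forall r, g <> a1_inv_nf ++ r) ->
  (forall r, g <> r ++ a1_inv_nf) ->
  nf_mul (qord m) g (qnf m (wrep [a1] (S i))) <> qact m (wrep [a1] (S i)) g.
Proof.
  intros Hg Hne HA HAI HE.
  destruct (qnf_a1_pow i) as [X [HX [HhX HvX]]]. rewrite HX.
  destruct (qact_a1_pow_hd g i Hg Hne HAI) as [c [r [HY Hc]]]. rewrite HY. intro Heq.
  destruct g as [|[b e] [|y g'']]; [congruence| |].
  - destruct Hg as [Hok _]. cbn [nf_mul fold_right] in Heq. destruct b.
    + specialize (Hc ltac:(simpl; congruence)). pose proof (reduced_syl_true e Hok).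
      rewrite smul_same, reduce_double_S_true in Heq.
      destruct (Z.eq_dec ((e + (N + 1)) mod (2 * N + 1)) 0) as [E0|E0].
      * rewrite E0, scons_0 in Heq. discriminate.
      * rewrite scons_neq0 in Heq by exact E0.
        assert (E1 : (e + (N + 1)) mod (2 * N + 1) = c) by congruence.
        destruct (Z_mod_cases (e + (N + 1)) (2 * N + 1)) as [[? E2]|[[? E2]|[? E2]]]; lia.
    + apply reduced_syl_false in Hok as ->.
      rewrite smul_diff, reduce_double_S_false, scons_neq0 in Heq
        by (congruence || now rewrite Z.mod_small by lia).
      discriminate.
  - destruct (exists_last (l := y :: g'') ltac:(congruence)) as [g1 [l El]].
    assert (Hg' : reduced (qord m) (((b, e) :: g1) ++ [l]))
      by (rewrite <- app_comm_cons, <- El; exact Hg).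
    assert (Hl : l <> (true, N)).
    { intros ->. destruct (exists_last (l := (b, e) :: g1) ltac:(congruence)) as [g2 [[b' e'] El']].
      rewrite El', <- app_assoc in Hg'. destruct (reduced_last_two _ _ _ _ Hg') as [Hok' Hs'].
      destruct b'; [simpl in Hs'; congruence|]. apply reduced_syl_false in Hok' as ->.
      apply (HE g2). now rewrite El, app_comm_cons, El', <- app_assoc. }
    destruct (smul_a1_nf l X (proj1 (reduced_app_r _ _ _ Hg')) Hl) as [e2 [r2 Hl2]].
    assert (HvA : reduced (qord m) ((true, N + 1) :: (false, 1) :: X))
      by (rewrite <- HX; apply qnf_reduced).
    pose proof (nf_mul_snoc_hd _ _ _ _ _ _ _ Hg' HvA Hl2) as Hhd.
    rewrite <- app_comm_cons, <- El, Heq in Hhd. injection Hhd as <- <-.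
    specialize (Hc ltac:(simpl; congruence)).
    destruct Hg as [_ [Hh [Hy _]]]. destruct y as [[|] ey]; [simpl in Hh; congruence|].
    apply reduced_syl_false in Hy as ->. subst c. now apply (HA g'').
Qed.

Lemma reduce_true_order x : x = 2 * N + 1 -> reduce_exp (qord m) true x = 0.
Proof. intros ->. rewrite reduce_double_S_true. apply Z_mod_same_full. Qed.

Lemma qnf_a1_inv_cons w r : qnf m w = a1_nf ++ r -> qnf m (linv a1 :: w) = r.
Proof.
  intro Hw. unfold qnf. change (linv a1 :: w) with ([linv a1] ++ w).
  rewrite qact_app. fold (qnf m w). rewrite Hw, qact_a1_inv_odd. cbn [app].
  rewrite smul_same_cancel by (apply reduce_true_order; lia).
  now rewrite smul_same_cancel by apply reduce_exp_0.
Qed.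

Lemma qnf_a1_cons w r : qnf m w = a1_inv_nf ++ r -> qnf m (a1 :: w) = r.
Proof.
  intro Hw. unfold qnf. change (a1 :: w) with ([a1] ++ w).
  rewrite qact_app. fold (qnf m w). rewrite Hw, qact_a1_odd. cbn [app].
  rewrite smul_same_cancel by now rewrite reduce_double_S_false.
  rewrite smul_same_cancel by (rewrite Z.add_opp_diag_l; apply reduce_exp_0). reflexivity.
Qed.

Lemma qnf_app_a1 w r : qnf m w = r ++ a1_inv_nf -> qnf m (w ++ [a1]) = r.
Proof.
  intro Hw. unfold qnf. rewrite qact_app, qact_qnf by solve_reduced.
  rewrite (qact_a1_cons []), Hw, nf_mul_app by exact I. cbn [nf_mul fold_right].
  rewrite smul_same_cancel by (apply reduce_true_order; lia).
  rewrite smul_same_cancel by now rewrite reduce_double_S_false.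
  apply nf_mul_nil_r, (reduced_app_l _ _ a1_inv_nf). rewrite <- Hw. apply qnf_reduced.
Qed.

(* Induction on the length of the normal form: peel off a1^(+-1) at an end whenever the normal
   form shows one; a1_pow_not_commute rules out every other nonempty normal form. *)
Lemma centralizer_a1_pow_double_S k w : 0 < k -> commute m w (wpow [a1] k) -> in_delta_a1 m w.
Proof.
  intro Hk. assert (Hm : (2 <= m)%nat) by lia.
  assert (Ek : wpow [a1] k = wrep [a1] (S (Z.to_nat k - 1)))
    by (rewrite <- wpow_of_nat; f_equal; lia).
  remember (length (qnf m w)) as n eqn:En. revert w En.
  induction n as [n IH] using lt_wf_ind. intros w En Hc.
  assert (Hx : forall x, x = a1 \/ x = linv a1 -> commute m (x :: w) (wpow [a1] k)).
  { intros x Hx. apply (commute_app_l m [x] w); [now apply commute_a1_pow | exact Hc]. }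
  destruct (prefix_dec a1_nf (qnf m w)) as [[r Er]|HA].
  { apply (in_delta_a1_artin_eq m _ (wpow [a1] 1 ++ (linv a1 :: w))).
    { rewrite wpow_1. change ([a1] ++ linv a1 :: w) with ([a1; linv a1] ++ w).
      now rewrite ae_free. }
    apply in_delta_a1_a1_pow_app; [exact Hm|].
    apply (IH (length r)); [rewrite En, Er; simpl; lia | now rewrite (qnf_a1_inv_cons w r Er) |].
    auto. }
  destruct (prefix_dec a1_inv_nf (qnf m w)) as [[r Er]|HAI].
  { apply (in_delta_a1_artin_eq m _ (wpow [a1] (-1) ++ (a1 :: w))).
    { rewrite wpow_m1. change (winv [a1] ++ a1 :: w) with ([linv a1; a1] ++ w).
      now rewrite ae_free_inv. }
    apply in_delta_a1_a1_pow_app; [exact Hm|].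
    apply (IH (length r)); [rewrite En, Er; simpl; lia | now rewrite (qnf_a1_cons w r Er) |].
    auto. }
  destruct (suffix_dec a1_inv_nf (qnf m w)) as [[r Er]|HE].
  { apply (in_delta_a1_artin_eq m _ ((w ++ [a1]) ++ wpow [a1] (-1))).
    { rewrite wpow_m1, <- app_assoc. change ([a1] ++ winv [a1]) with [a1; linv a1].
      now rewrite ae_free, app_nil_r. }
    apply in_delta_a1_app_a1_pow.
    apply (IH (length r));
      [rewrite En, Er, length_app; simpl; lia | now rewrite (qnf_app_a1 w r Er) |].
    apply commute_app_l; [exact Hc | apply commute_a1_pow; now left]. }
  destruct (list_eq_dec syl_eq_dec (qnf m w) []) as [E0|Hne].
  { apply in_delta_a1_of_qlift; [exact Hm|]. rewrite E0. exists 0, 0. reflexivity. }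
  exfalso. pose proof (qact_artin_eq m _ _ Hm Hc [] I) as E.
  rewrite !qact_app, Ek, (qact_qnf m w) in E by solve_reduced.
  exact (a1_pow_not_commute _ _ (qnf_reduced m w) Hne HA HAI HE E).
Qed.

End OddCentralizer.

Lemma centralizer_a1_pow m k w : (2 <= m)%nat -> k <> 0 ->
  commute m w (wpow [a1] k) -> in_delta_a1 m w.
Proof.
  intros Hm Hk H. destruct (parity_cases m Hm) as [[j [-> Hj]]|[j [-> Hj]]].
  - exact (centralizer_a1_pow_double j k w Hj Hk H).
  - destruct (Z_lt_le_dec 0 k) as [Hpos|Hneg].
    + exact (centralizer_a1_pow_double_S j Hj k w Hpos H).
    + apply (centralizer_a1_pow_double_S j Hj (- k) w ltac:(lia)).
      apply commute_sym in H. apply commute_winv_l, commute_sym in H.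
      unfold commute in *. now rewrite winv_wpow in H.
Qed.

Lemma qnf_winv_nil m u : (2 <= m)%nat -> qnf m u = [] -> qnf m (winv u) = [].
Proof. intros Hm Hu. unfold qnf. rewrite <- Hu at 1. now apply qact_winv_l. Qed.

Lemma qnf_a1_pow_neq_nil m q : (2 <= m)%nat -> q <> 0 -> qnf m (wpow [a1] q) <> [].
Proof.
  intros Hm Hq.
  assert (Hpos : forall q, 0 < q -> qnf m (wpow [a1] q) <> []).
  { clear q Hq. intros q Hq. destruct (parity_cases m Hm) as [[j [-> Hj]]|[j [-> Hj]]].
    - unfold qnf. rewrite (qact_wpow _ [a1] false 1) by (auto using qact_a1_double; exact I).
      rewrite smul_nil, reduce_double_false, scons_neq0 by lia. discriminate.
    - replace q with (Z.of_nat (S (Z.to_nat q - 1))) by lia. rewrite wpow_of_nat.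
      destruct (qnf_a1_pow j Hj (Z.to_nat q - 1)) as [X [-> _]]. discriminate. }
  destruct (Z_lt_le_dec 0 q) as [H|H]; [now apply Hpos|].
  intro E. apply (Hpos (- q) ltac:(lia)). unfold qnf.
  rewrite <- (qact_artin_eq m _ _ Hm (winv_wpow m [a1] q) [] I). now apply qnf_winv_nil.
Qed.

Fixpoint exp_sum (w : word) : Z :=
  match w with [] => 0 | x :: w' => (if snd x then -1 else 1) + exp_sum w' end.

Lemma exp_sum_app u v : exp_sum (u ++ v) = exp_sum u + exp_sum v.
Proof. induction u; simpl; lia. Qed.

Lemma exp_sum_Pi s t k : snd s = false -> snd t = false -> exp_sum (Pi s t k) = Z.of_nat k.
Proof.
  revert s t. induction k as [|k IH]; intros s t Hs Ht; simpl; [reflexivity|].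
  rewrite Hs, IH by assumption. lia.
Qed.

Lemma exp_sum_artin_eq m u v : artin_eq m u v -> exp_sum u = exp_sum v.
Proof.
  induction 1; try congruence.
  - rewrite !exp_sum_app. congruence.
  - destruct x as [b [|]]; reflexivity.
  - now rewrite !exp_sum_Pi.
Qed.

Lemma exp_sum_winv w : exp_sum (winv w) = - exp_sum w.
Proof.
  induction w as [|[b [|]] w IH]; [reflexivity| |];
    rewrite winv_cons, exp_sum_app, IH; cbn [exp_sum linv fst snd negb]; lia.
Qed.

Lemma exp_sum_wpow w k : exp_sum (wpow w k) = k * exp_sum w.
Proof.
  assert (Hrep : forall u n, exp_sum (wrep u n) = Z.of_nat n * exp_sum u).
  { intros u n. induction n as [|n IH]; simpl wrep; [reflexivity|]. rewrite exp_sum_app, IH. lia. }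
  unfold wpow. destruct (0 <=? k) eqn:E.
  - apply Z.leb_le in E. now rewrite Hrep, Z2Nat.id.
  - apply Z.leb_gt in E. rewrite Hrep, exp_sum_winv, Z2Nat.id by lia. ring.
Qed.

Lemma exp_sum_delta_pos m : (1 <= m)%nat -> 0 < exp_sum (delta m).
Proof.
  intro Hm. unfold delta, Delta.
  destruct (Nat.odd m); rewrite ?exp_sum_app, exp_sum_Pi by reflexivity; lia.
Qed.

Lemma delta_a1_independent m p q : (2 <= m)%nat ->
  artin_eq m (wpow (delta m) p ++ wpow [a1] q) [] -> p = 0 /\ q = 0.
Proof.
  intros Hm H.
  assert (Hq : q = 0).
  { destruct (Z.eq_dec q 0) as [|Hq]; [assumption|]. exfalso.
    apply (qnf_a1_pow_neq_nil m q Hm Hq).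
    pose proof (qact_artin_eq m _ _ Hm H [] I) as E.
    now rewrite qact_app, qact_delta_pow in E by solve_reduced. }
  subst q. split; [|reflexivity].
  apply exp_sum_artin_eq in H. rewrite exp_sum_app, !exp_sum_wpow in H. simpl in H.
  pose proof (exp_sum_delta_pos m ltac:(lia)). nia.
Qed.

Theorem lemma2p4 (m : nat) (k1 k2 : Z) :
  (2 <= m)%nat -> k2 <> 0%Z ->
  (forall w : word,
      artin_eq m (w ++ (wpow (delta m) k1 ++ wpow [a1] k2))
                 ((wpow (delta m) k1 ++ wpow [a1] k2) ++ w)
      <-> exists p q : Z, artin_eq m w (wpow (delta m) p ++ wpow [a1] q))
  /\ artin_eq m (delta m ++ [a1]) ([a1] ++ delta m)
  /\ (forall p q : Z,
        artin_eq m (wpow (delta m) p ++ wpow [a1] q) [] -> p = 0%Z /\ q = 0%Z).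
Proof.
  intros Hm Hk.
  assert (Hc : forall i, central m (wpow (delta m) i)) by (intro; apply delta_pow_central; lia).
  unfold central, commute in Hc.
  split; [|split].
  - intro w. split.
    + intro H. apply (centralizer_a1_pow m k2 w Hm Hk), (app_cancel_l m (wpow (delta m) k1)).
      rewrite app_assoc, (Hc k1 w), <- app_assoc, H, <- app_assoc. reflexivity.
    + intros [p [q Hw]]. rewrite Hw. apply commute_app_l; [apply Hc|].
      apply commute_app_r; [apply commute_sym, Hc | apply wpow_comm].
  - apply (delta_central m ltac:(lia)).
  - intros p q. now apply delta_a1_independent.
Qed.
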